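(* Let $r,p$ be positive integers with $p$ prime, and let $k$ be the largest integer such that $p>2k^2r^2$. Then there exists a set $S\subseteq\{0,\dots,p-1\}$ of size at least $k$ that does not contain an $r$-weighted arithmetic progression modulo $p$.
   Context: A set $S$ of non-negative integers contains no $r$-weighted arithmetic progression modulo $p$ if there do not exist pairwise distinct $s_1,s_2,s_3\in S$ and integers $0<x,y<r-1$ with $x+y<r$ such that $xs_1+ys_2\equiv(x+y)s_3\pmod p$. *)

From mathcomp Require Import all_boot.
Set Implicit Arguments. Unset Strict Implicit. Unset Printing Implicit Defensive.

Definition has_rwap (r p : nat) (S : {set 'I_p}) : Prop :=
  exists (s1 s2 s3 : 'I_p) (x y : nat),
    [/\ [/\ s1 \in S, s2 \in S & s3 \in S],
        [/\ s1 != s2, s1 != s3 & s2 != s3],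
        [/\ 0 < x, x < r - 1, 0 < y, y < r - 1 & x + y < r] &
        x * s1 + y * s2 = (x + y) * s3 %[mod p]].

Definition no_rwap (r p : nat) (S : {set 'I_p}) : Prop := ~ has_rwap r S.

(** Grow [S] greedily.  If [S] has no r-weighted progression, a new point
    [s] can only create one by playing the role of an endpoint or of the
    centre of a progression whose two other terms [a, b] lie in [S].  For
    fixed [a, b] and weights [x, y] the congruence determines [s] uniquely,
    because the relevant coefficient ([x] or [x + y]) is a unit modulo the
    prime [p].  Hence at most [#|S| + 2 #|S|^2 r^2] points are excluded, and
    [S] can be enlarged as long as this is below [p]; starting from the empty
    set this reaches size [k] whenever [2 k^2 r^2 < p]. *)
From mathcomp Require Import all_boot.
From mathcomp Require Import zify.

Set Implicit Arguments. Unset Strict Implicit. Unset Printing Implicit Defensive.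

Lemma prime_modMl p c m n : prime p -> 0 < c < p ->
  c * m = c * n %[mod p] -> m = n %[mod p].
Proof.
move=> p_pr /andP[c_gt0 c_lt_p].
have p_ndvd_c : ~~ (p %| c) by apply/negP => /(dvdn_leq c_gt0); lia.
wlog le_nm : m n / n <= m.
  by move=> IH; case: (leqP n m) => [|/ltnW le_mn eq_c]; [apply: IH|rewrite (IH n m)].
move/eqP; rewrite eqn_mod_dvd ?leq_mul2l ?le_nm ?orbT // -mulnBr.
by rewrite Gauss_dvdr ?prime_coprime // -eqn_mod_dvd // => /eqP.
Qed.

Lemma card_bigcup_leq (I T : finType) (P : pred I) (F : I -> {set T}) :
  #|\bigcup_(i | P i) F i| <= \sum_(i | P i) #|F i|.
Proof.
elim/big_rec2: _ => [|i n U _ IH]; first by rewrite cards0.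
by rewrite (leq_trans (leq_card_setU _ _)) ?leq_add2l.
Qed.

Definition rwap_weights (r x y : nat) : bool := [&& 0 < x, 0 < y & x + y < r].

Section Completions.
Variables (r p : nat).
Implicit Types (S : {set 'I_p}) (a b s t : 'I_p) (x y : nat).

Definition end_completions a b x y : {set 'I_p} :=
  [set t : 'I_p | rwap_weights r x y && (x * t + y * a == (x + y) * b %[mod p])].

Definition mid_completions a b x y : {set 'I_p} :=
  [set t : 'I_p | rwap_weights r x y && (x * a + y * b == (x + y) * t %[mod p])].

Definition rwap_completions S : {set 'I_p} :=
  \bigcup_(z in setX (setX S S) [set: 'I_r * 'I_r])
    (end_completions z.1.1 z.1.2 z.2.1 z.2.2
       :|: mid_completions z.1.1 z.1.2 z.2.1 z.2.2).

Lemma mem_rwap_completions S a b x y t : a \in S -> b \in S ->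
  (t \in end_completions a b x y) || (t \in mid_completions a b x y) ->
  t \in rwap_completions S.
Proof.
move=> aS bS; rewrite !inE -andb_orr => /andP[w t_ab].
have [x_gt0 y_gt0 xy_lt_r] := and3P w.
have x_lt_r : x < r by lia.
have y_lt_r : y < r by lia.
apply/bigcupP; exists (a, b, (Ordinal x_lt_r, Ordinal y_lt_r)).
  by rewrite !inE aS bS.
by rewrite !inE w.
Qed.

Lemma no_rwap_setU1 S s : no_rwap r S -> s \notin rwap_completions S ->
  no_rwap r (s |: S).
Proof.
move=> S_free s_new [s1 [s2 [s3 [x [y [[s1S s2S s3S] [n12 n13 n23] bounds E]]]]]].
have [x_gt0 _ y_gt0 _ xy_lt_r] := bounds.
have w : rwap_weights r x y by apply/and3P.
have w' : rwap_weights r y x by rewrite /rwap_weights addnC y_gt0 x_gt0.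
have inS t : t \in s |: S -> t != s -> t \in S.
  by rewrite in_setU1 => /orP[/eqP->|//]; rewrite eqxx.
case: (eqVneq s1 s) => [e1|n1].
  subst s; case/negP: s_new; apply: (@mem_rwap_completions _ s2 s3 x y).
  - by apply: inS; rewrite // eq_sym.
  - by apply: inS; rewrite // eq_sym.
  - by rewrite inE w E eqxx.
case: (eqVneq s2 s) => [e2|n2].
  subst s; case/negP: s_new; apply: (@mem_rwap_completions _ s1 s3 y x).
  - exact: inS.
  - by apply: inS; rewrite // eq_sym.
  - by rewrite inE w' addnC [y + x]addnC E eqxx.
case: (eqVneq s3 s) => [e3|n3].
  subst s; case/negP: s_new; apply: (@mem_rwap_completions _ s1 s2 x y).
  - exact: inS.
  - exact: inS.
  - by rewrite !inE w E eqxx orbT.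
by apply: S_free; exists s1, s2, s3, x, y; split=> //; split; apply: inS.
Qed.

Hypotheses (p_prime : prime p) (r_le_p : r <= p).

Lemma ord_prime_modMl c a b : 0 < c < r -> c * a = c * b %[mod p] -> a = b.
Proof.
move=> c_bounds eq_c; apply: val_inj.
have c_lt_p : 0 < c < p by lia.
by have := prime_modMl p_prime c_lt_p eq_c; rewrite !modn_small.
Qed.

Lemma card_end_completions a b x y : #|end_completions a b x y| <= 1.
Proof.
apply/card_le1_eqP => t1 t2; rewrite !inE => /andP[w E1] /andP[_ E2].
have [x_gt0 _ xy_lt_r] := and3P w.
apply: (@ord_prime_modMl x); first by lia.
by apply/eqP; rewrite -(eqn_modDr (y * a)) (eqP E1) (eqP E2).
Qed.

Lemma card_mid_completions a b x y : #|mid_completions a b x y| <= 1.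
Proof.
apply/card_le1_eqP => t1 t2; rewrite !inE => /andP[w E1] /andP[_ E2].
have [x_gt0 _ xy_lt_r] := and3P w.
apply: (@ord_prime_modMl (x + y)); first by lia.
by rewrite -(eqP E1) (eqP E2).
Qed.

Lemma card_rwap_completions S : #|rwap_completions S| <= 2 * #|S| ^ 2 * r ^ 2.
Proof.
apply: (leq_trans (card_bigcup_leq _ _)).
apply: (@leq_trans (\sum_(z in setX (setX S S) [set: 'I_r * 'I_r]) 2)).
  apply: leq_sum => z _; apply: (leq_trans (leq_card_setU _ _)).
  by rewrite -addn1 leq_add ?card_end_completions ?card_mid_completions.
rewrite sum_nat_const !cardsX cardsT card_prod card_ord; lia.
Qed.

Lemma no_rwap_extend S : no_rwap r S -> #|S| + 2 * #|S| ^ 2 * r ^ 2 < p ->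
  exists S' : {set 'I_p}, #|S'| = #|S|.+1 /\ no_rwap r S'.
Proof.
move=> S_free small.
have U_small : #|S :|: rwap_completions S| < p.
  rewrite (leq_ltn_trans (leq_card_setU _ _)) // (leq_ltn_trans _ small) //.
  by rewrite leq_add2l card_rwap_completions.
have /card_gt0P[s] : 0 < #|~: (S :|: rwap_completions S)|.
  by have := cardsC (S :|: rwap_completions S); rewrite card_ord; lia.
rewrite !inE negb_or => /andP[sS s_new].
by exists (s |: S); rewrite cardsU1 sS; split=> //; apply: no_rwap_setU1.
Qed.

End Completions.

Lemma exists_no_rwap_set r p m : 0 < r -> prime p -> 2 * m ^ 2 * r ^ 2 < p ->
  exists S : {set 'I_p}, #|S| = m /\ no_rwap r S.
Proof.
move=> r_gt0 p_prime; elim: m => [_|m IH small].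
  exists set0; rewrite cards0; split=> // -[s1 [s2 [s3 [x [y [[]]]]]]].
  by rewrite in_set0.
have r_le_p : r <= p by nia.
have [|S [card_S S_free]] := IH; first by nia.
by rewrite -card_S; apply: no_rwap_extend; rewrite // card_S; nia.
Qed.

Theorem theorem10 (r p k : nat) :
  0 < r -> prime p ->
  2 * k ^ 2 * r ^ 2 < p ->
  (forall k' : nat, 2 * k' ^ 2 * r ^ 2 < p -> k' <= k) ->
  exists S : {set 'I_p}, k <= #|S| /\ no_rwap r S.
Proof.
move=> r_gt0 p_prime small _.
have [S [<- S_free]] := exists_no_rwap_set r_gt0 p_prime small.
by exists S.
Qed.
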